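(* Consider the multiobjective optimal control setting, Assumption A, Assumption B and Algorithm 1 described in the context, and let $x_0\in\mathbb{X}_N$. Then the MPC feedback $\mu^N:\mathbb{N}_0\times\mathbb{X}\to\mathbb{U}$ defined by Algorithm 1 has the infinite-horizon averaged closed-loop performance \[\bar J_i^\infty(x_0,\mu^N):=\limsup_{K\to\infty}\frac1K\sum_{k=0}^{K-1}\ell_i\big(x_\mu(k,x_0),\mu^N(k,x_\mu(k,x_0))\big)\le\ell_i(x^e,u^e)\] for all objectives $i\in\{2,\dots,s\}$.
   Context: Let $f:\mathbb{R}^n\times\mathbb{R}^m\to\mathbb{R}^n$ be continuous and consider $x(k+1)=f(x(k),u(k))$, $x(0)=x_0$; $x_{\mathbf{u}}(k,x_0)$ denotes the solution for control sequence $\mathbf u$. Let $\mathbb{X}\subseteq\mathbb{R}^n$, $\mathbb{U}\subseteq\mathbb{R}^m$, $\mathbb{X}_0\subseteq\mathbb{X}$ be nonempty; horizons $N\ge2$, objectives $s\ge2$. $\mathbb{U}^N(x_0)$ is the set of $\mathbf{u}\in\mathbb{U}^N$ with $x_{\mathbf{u}}(k,x_0)\in\mathbb{X}$ for $k=1,\dots,N-1$ and $x_{\mathbf{u}}(N,x_0)\in\mathbb{X}_0$; $\mathbb{X}_N=\{x_0\in\mathbb{X}:\mathbb{U}^N(x_0)\neq\emptyset\}$. With stage costs $\ell_i:\mathbb{X}\times\mathbb{U}\to\mathbb{R}$ ($i=1,\dots,s$) and continuous $F_1:\mathbb{X}_0\to\mathbb{R}_{\ge0}$: $J_1^N(x_0,\mathbf{u})=\sum_{k=0}^{N-1}\ell_1(x_{\mathbf{u}}(k,x_0),u(k))+F_1(x_{\mathbf{u}}(N,x_0))$,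 $J_i^N(x_0,\mathbf{u})=\sum_{k=0}^{N-1}\ell_i(x_{\mathbf{u}}(k,x_0),u(k))$ for $i\ge2$. $\mathbf{u}^\star\in\mathbb{U}^N(x_0)$ is efficient if no $\mathbf{u}\in\mathbb{U}^N(x_0)$ satisfies $J_i^N(x_0,\mathbf{u})\le J_i^N(x_0,\mathbf{u}^\star)$ for all $i$ with strict inequality for some $i$; $\mathbb{U}^N_{\mathcal P}(x_0)$ is the efficient set. $\mathcal{J}^N(x_0)$ is the set of vectors $(J_i^N(x_0,\mathbf u))_{i=1}^s$, $\mathbf u\in\mathbb{U}^N(x_0)$, $\mathcal{J}^N_{\mathcal P}(x_0)$ the subset for efficient $\mathbf u$; external stability means every $y\in\mathcal{J}^N(x_0)$ dominates componentwise some $y_{\mathcal P}\in\mathcal{J}^N_{\mathcal P}(x_0)$. $\mathcal K_\infty$: continuous strictly increasing unbounded functions $\mathbb{R}_{\ge0}\to\mathbb{R}_{\ge0}$ vanishing at $0$. Assumption A: (i) $(x^e,u^e)\in\mathbb{X}\times\mathbb{U}$ with $f(x^e,u^e)=x^e$; (ii) $\lambda_1:\mathbb{X}\to\mathbb{R}$ bounded below, $\lambda_1(x^e)=0$, $\alpha_{\ell,1}\in\mathcal K_\infty$ with $\ell_1(x,u)-\ell_1(x^e,u^e)+\lambda_1(x)-\lambda_1(f(x,u))\ge\alpha_{\ell,1}(\|x-x^e\|+\|u-u^e\|)$ on $\mathbb{X}\times\mathbb{U}$; (iii) all $\ell_i$ continuous; (iv) $x^e\in\mathbb{X}_0$ and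 $\kappa:\mathbb{X}_0\to\mathbb{U}$ with $f(x,\kappa(x))\in\mathbb{X}_0$ and $F_1(f(x,\kappa(x)))+\ell_1(x,\kappa(x))\le F_1(x)+\ell_1(x^e,u^e)$ for all $x\in\mathbb{X}_0$; (v) $\mathcal{J}^N_{\mathcal P}(x)$ externally stable for $\mathcal{J}^N(x)$ for all $x\in\mathbb{X}_N$. Assumption B: there are $\gamma_{F_1},\gamma_{\lambda_1}\in\mathcal K_\infty$ with (i) $F_1(x^e)=0$ and $|F_1(x)-F_1(x^e)|\le\gamma_{F_1}(\|x-x^e\|)$ for all $x\in\mathbb{X}_0$; (ii) $|\lambda_1(x)-\lambda_1(x^e)|\le\gamma_{\lambda_1}(\|x-x^e\|)$ for all $x\in\mathbb{X}$. Algorithm 1 ($k\in\mathbb N_0$): $x(0)=x_0$, choose any $\mathbf{u}^\star_{x(0)}\in\mathbb{U}^N_{\mathcal P}(x(0))$; for $k\ge1$ choose $\mathbf{u}^\star_{x(k)}\in\mathbb{U}^N_{\mathcal P}(x(k))$ with $J_1^N(x(k),\mathbf{u}^\star_{x(k)})\le J_1^N(x(k),\mathbf{u}_{x(k)})$, where $\mathbf{u}_{x(k+1)}:=(u^\star_{x(k)}(1),\dots,u^\star_{x(k)}(N-1),\kappa(x_{\mathbf{u}^\star_{x(k)}}(N,x(k))))$. Feedback $\mu^N(k,x(k)):=u^\star_{x(k)}(0)$, $x(k+1)=f(x(k),\mu^N(k,x(k)))$, $x_\mu(k,x_0):=x(k)$. The statement applies to any admissible choices of efficient solutions. *)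

From HB Require Import structures.
From mathcomp Require Import all_boot all_order all_algebra.
From mathcomp Require Import all_classical all_reals all_analysis.
Set Implicit Arguments. Unset Strict Implicit. Unset Printing Implicit Defensive.
Import Order.TTheory GRing.Theory Num.Theory.
Import numFieldNormedType.Exports.
Local Open Scope classical_set_scope.
Local Open Scope ring_scope.

Section MOMPC.
Variables (R : realType) (n m : nat).
Notation st := 'rV[R]_n.
Notation ct := 'rV[R]_m.

(* class K_infinity: functions R_{>=0} -> R_{>=0}, continuous, strictly
   increasing, unbounded, vanishing at 0 (only values on [0,oo) matter) *)
Definition Kinf (a : R -> R) : Prop :=
  [/\ a 0 = 0,
      {within [set x : R | 0 <= x], continuous a},
      (forall x y, 0 <= x -> x < y -> a x < a y)
    & (forall M : R, exists x, 0 <= x /\ M <= a x)].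

Fixpoint traj (f : st -> ct -> st) (x0 : st) (u : nat -> ct) (k : nat) : st :=
  match k with
  | 0 => x0
  | k'.+1 => f (traj f x0 u k') (u k')
  end.

(* u in U^N(x0); only u 0, ..., u (N-1) are relevant *)
Definition admissible (f : st -> ct -> st) (X : set st) (U : set ct) (X0 : set st)
  (N : nat) (x0 : st) (u : nat -> ct) : Prop :=
  [/\ (forall k, (k < N)%N -> U (u k)),
      (forall k, (1 <= k)%N -> (k <= N.-1)%N -> X (traj f x0 u k))
    & X0 (traj f x0 u N)].

Definition feasible_set (f : st -> ct -> st) (X : set st) (U : set ct) (X0 : set st)
  (N : nat) : set st :=
  [set x0 | X x0 /\ exists u, admissible f X U X0 N x0 u].

(* J_i^N(x0,u); objective with index 0 : 'I_s is objective 1 (with terminal cost F1) *)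
Definition Jcost (s : nat) (f : st -> ct -> st) (l : 'I_s -> st -> ct -> R)
  (F1 : st -> R) (N : nat) (x0 : st) (u : nat -> ct) (i : 'I_s) : R :=
  \sum_(k < N) l i (traj f x0 u k) (u k)
  + (if (i : nat) == 0%N then F1 (traj f x0 u N) else 0).

Definition efficient (s : nat) (f : st -> ct -> st) (X : set st) (U : set ct)
  (X0 : set st) (l : 'I_s -> st -> ct -> R) (F1 : st -> R) (N : nat)
  (x0 : st) (u : nat -> ct) : Prop :=
  admissible f X U X0 N x0 u /\
  ~ (exists v, admissible f X U X0 N x0 v /\
       (forall i, Jcost f l F1 N x0 v i <= Jcost f l F1 N x0 u i) /\
       (exists i, Jcost f l F1 N x0 v i < Jcost f l F1 N x0 u i)).

Definition externally_stable (s : nat) (f : st -> ct -> st) (X : set st) (U : set ct)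
  (X0 : set st) (l : 'I_s -> st -> ct -> R) (F1 : st -> R) (N : nat) (x : st) : Prop :=
  forall u, admissible f X U X0 N x u ->
    exists2 up, efficient f X U X0 l F1 N x up &
      forall i, Jcost f l F1 N x up i <= Jcost f l F1 N x u i.

Definition shifted_candidate (f : st -> ct -> st) (kappa : st -> ct) (N : nat)
  (x : st) (u : nat -> ct) : nat -> ct :=
  fun j => if (j.+1 < N)%N then u j.+1 else kappa (traj f x u N).

End MOMPC.

From HB Require Import structures.
From mathcomp Require Import all_boot all_order all_algebra.
From mathcomp Require Import all_classical all_reals all_analysis.
From mathcomp Require Import lra.
Set Implicit Arguments. Unset Strict Implicit. Unset Printing Implicit Defensive.
Import Order.TTheory GRing.Theory Num.Theory.
Import numFieldNormedType.Exports.
Local Open Scope classical_set_scope.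
Local Open Scope ring_scope.

(** The stage cost of objective 1, rotated by the storage function
    [lambda1], is positive definite about the equilibrium [(xe, ue)]. The
    shifted candidate together with the terminal condition shows that the
    rotated MPC value [J1 + lambda1] drops by at least
    [alpha1 (|x - xe| + |u - ue|)] at each closed-loop step, and summing the
    dissipation inequality along any admissible prediction bounds it from
    below. Hence these decrements are summable, the closed loop converges to
    [(xe, ue)], every [l_i] converges to [l_i (xe, ue)] by continuity, and so
    do its Cesaro means. *)

Section KinfFacts.
Variables (R : realType) (a : R -> R).
Hypothesis a_Kinf : Kinf a.

Lemma Kinf_le x y : 0 <= x -> x <= y -> a x <= a y.
Proof.
have [_ _ a_mono _] := a_Kinf.
move=> x_ge0; rewrite le_eqVlt => /predU1P[->//|xy].
exact/ltW/a_mono.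
Qed.

Lemma Kinf_ge0 x : 0 <= x -> 0 <= a x.
Proof. by move=> x_ge0; have [a0 _ _ _] := a_Kinf; rewrite -a0 Kinf_le. Qed.

Lemma Kinf_cvg0 (d : R^nat) : (forall k, 0 <= d k) ->
  (fun k => a (d k)) @ \oo --> 0 -> d @ \oo --> 0.
Proof.
have [a0 _ a_mono _] := a_Kinf.
move=> d_ge0 /cvgr0Pnorm_lt ad_cvg; apply/cvgr0Pnorm_lt => e e_gt0.
have ae_gt0 : 0 < a e by rewrite -a0 a_mono.
apply: filterS (ad_cvg _ ae_gt0) => k.
rewrite !ger0_norm ?Kinf_ge0 // => ltade.
by rewrite ltNge; apply: contraTN ltade => le_ed; rewrite -leNgt Kinf_le // ltW.
Qed.

End KinfFacts.

Lemma sum_le_telescope (R : numDomainType) (a w : nat -> R) K :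
  (forall k, (k < K)%N -> a k <= w k - w k.+1) ->
  \sum_(k < K) a k <= w 0%N - w K.
Proof.
elim: K => [|K IH] le_aw; first by rewrite big_ord0 subrr.
rewrite big_ord_recr /= -[w 0%N](subrK (w K)) -addrA.
apply: lerD (le_aw K (ltnSn K)).
by apply: IH => k ltkK; apply/le_aw/ltnW.
Qed.

Lemma nneg_bounded_series_cvg0 (R : realType) (a : R^nat) (C : R) :
  (forall k, 0 <= a k) -> (forall K, \sum_(k < K) a k <= C) -> a @ \oo --> 0.
Proof.
move=> a_ge0 sum_le; apply: cvg_series_cvg_0; apply: nondecreasing_is_cvgn.
  by rewrite seriesEnat; apply: nondecreasing_series => k _ _.
by exists C => _ [K _ <-]; rewrite seriesEord /=; apply: sum_le.
Qed.

Lemma cvg_pair_dist (R : realType) (V W : normedModType R)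
    (x : nat -> V) (y : nat -> W) (a : V) (b : W) :
  (fun k => `|x k - a| + `|y k - b|) @ \oo --> 0 ->
  (fun k => (x k, y k)) @ \oo --> (a, b).
Proof.
move=> d_cvg0.
have dist_cvg (T : normedModType R) (z : nat -> T) c e :
    (forall k, `|z k - c| <= e k) -> e @ \oo --> 0 -> z @ \oo --> c.
  move=> le_ze e_cvg0; apply/subr_cvg0; apply: norm_cvg0.
  apply: (squeeze_cvgr _ (cvg_cst 0) e_cvg0).
  by apply: nearW => k; rewrite normr_ge0 le_ze.
apply: cvg_pair; apply: dist_cvg d_cvg0 => k.
  by rewrite lerDl.
by rewrite lerDr.
Qed.

Lemma within_continuous_cvg (T S : topologicalType) (A : set T) (g : T -> S)
    (p : nat -> T) (a : T) :
  {within A, continuous g} -> A a -> (forall k, A (p k)) ->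
  p @ \oo --> a -> g (p k) @[k --> \oo] --> g a.
Proof.
move=> /subspace_continuousP g_cont Aa Ap p_cvg.
have p_cvg_within : p @ \oo --> within A (nbhs a).
  move=> P; rewrite /within /= => /p_cvg; rewrite !nbhs_simpl /=.
  by apply: filterS => k /(_ (Ap k)).
exact: cvg_trans (cvg_app g p_cvg_within) (g_cont a Aa).
Qed.

Lemma cesaro_limn_esup (R : realType) (u : R^nat) (l : R) : u @ \oo --> l ->
  limn_esup (fun K => ((K%:R)^-1 * \sum_(k < K) u k)%:E) = l%:E.
Proof.
move=> u_cvg; apply: (cvg_limn_einf_sup _).2; apply: cvg_EFin; first exact: nearW.
rewrite -cvg_shiftS.
suff -> : [sequence (n.+1%:R)^-1 * \sum_(k < n.+1) u k]_n = arithmetic_mean u.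
  exact: cesaro.
by apply/funext => K; rewrite /arithmetic_mean /= seriesEord.
Qed.

Section ShiftedCandidate.
Variables (R : realType) (n m s : nat).
Variables (f : 'rV[R]_n -> 'rV[R]_m -> 'rV[R]_n) (kappa : 'rV[R]_n -> 'rV[R]_m).
Variables (l : 'I_s -> 'rV[R]_n -> 'rV[R]_m -> R) (F1 : 'rV[R]_n -> R) (i0 : 'I_s).
Hypothesis i0E : (i0 : nat) = 0%N.

Lemma traj_shifted_candidate N x u j : (j < N)%N ->
  traj f (f x (u 0%N)) (shifted_candidate f kappa N x u) j = traj f x u j.+1.
Proof.
elim: j => [|j IH] ltjN //=.
by rewrite IH ?(ltnW ltjN) // /shifted_candidate ltjN.
Qed.

Lemma traj_shifted_candidate_last N x u : (0 < N)%N ->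
  traj f (f x (u 0%N)) (shifted_candidate f kappa N x u) N
  = f (traj f x u N) (kappa (traj f x u N)).
Proof.
case: N => [|N] //= _.
by rewrite traj_shifted_candidate // /shifted_candidate ltnn.
Qed.

Lemma Jcost_first N x u :
  Jcost f l F1 N x u i0 = \sum_(k < N) l i0 (traj f x u k) (u k) + F1 (traj f x u N).
Proof. by rewrite /Jcost i0E. Qed.

Lemma Jcost_shifted_candidate N x u : (0 < N)%N ->
  Jcost f l F1 N (f x (u 0%N)) (shifted_candidate f kappa N x u) i0
    + l i0 x (u 0%N) + F1 (traj f x u N)
  = Jcost f l F1 N x u i0 + l i0 (traj f x u N) (kappa (traj f x u N))
    + F1 (f (traj f x u N) (kappa (traj f x u N))).
Proof.
move=> N_gt0; rewrite !Jcost_first traj_shifted_candidate_last //.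
case: N N_gt0 => [|N] // _.
set xN := traj f x u N.+1.
have -> : \sum_(k < N.+1) l i0 (traj f (f x (u 0%N)) (shifted_candidate f kappa N.+1 x u) k)
                           (shifted_candidate f kappa N.+1 x u k)
          = \sum_(k < N) l i0 (traj f x u k.+1) (u k.+1) + l i0 xN (kappa xN).
  rewrite big_ord_recr; congr (_ + _).
    apply: eq_bigr => k _; rewrite [widen_ord _ _ : nat]/=.
    by rewrite traj_shifted_candidate 1?ltnW // /shifted_candidate ltnS ltn_ord.
  by rewrite /= traj_shifted_candidate // /shifted_candidate ltnn.
rewrite big_ord_recl /=.
lra.
Qed.

End ShiftedCandidate.

Section DissipativeMPC.
Variables (R : realType) (n m s N : nat).
Variables (f : 'rV[R]_n -> 'rV[R]_m -> 'rV[R]_n) (X : set 'rV[R]_n) (U : set 'rV[R]_m).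
Variables (X0 : set 'rV[R]_n) (l : 'I_s -> 'rV[R]_n -> 'rV[R]_m -> R).
Variables (F1 : 'rV[R]_n -> R) (kappa : 'rV[R]_n -> 'rV[R]_m) (i0 : 'I_s).
Variables (xe : 'rV[R]_n) (ue : 'rV[R]_m) (lambda1 : 'rV[R]_n -> R) (alpha1 : R -> R).
Variable M : R.
Hypotheses (N_gt0 : (0 < N)%N) (i0E : (i0 : nat) = 0%N) (X0X : X0 `<=` X).
Hypothesis F1_ge0 : forall x, X0 x -> 0 <= F1 x.
Hypothesis lambda1_ge : forall x, X x -> M <= lambda1 x.
Hypothesis alpha1_Kinf : Kinf alpha1.
Hypothesis dissipative : forall x u, X x -> U u -> X (f x u) ->
  alpha1 (`|x - xe| + `|u - ue|) <= l i0 x u - l i0 xe ue + lambda1 x - lambda1 (f x u).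
Hypothesis terminal_decrease : forall x, X0 x ->
  F1 (f x (kappa x)) + l i0 x (kappa x) <= F1 x + l i0 xe ue.

Local Notation admissible := (admissible f X U X0 N).
Local Notation J x u := (Jcost f l F1 N x u i0).

Lemma admissible_traj_in x u j : X x -> admissible x u -> (j <= N)%N ->
  X (traj f x u j).
Proof.
move=> Xx [_ X_mid X0_end]; case: j => [|j] // lejN.
have [ltjN|leNj] := ltnP j.+1 N; first by apply: X_mid; rewrite // -ltnS prednK.
suff -> : j.+1 = N by apply: X0X.
by apply/eqP; rewrite eqn_leq lejN.
Qed.

Lemma Jcost_shifted_candidate_le x u : admissible x u ->
  J (f x (u 0%N)) (shifted_candidate f kappa N x u) <= J x u - l i0 x (u 0%N) + l i0 xe ue.
Proof.
move=> [_ _ /terminal_decrease].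
have := Jcost_shifted_candidate f kappa l F1 i0E x u N_gt0.
lra.
Qed.

Lemma stage_cost_dissipation x u : X x -> U u -> X (f x u) ->
  l i0 xe ue - l i0 x u <= lambda1 x - lambda1 (f x u).
Proof.
move=> Xx Uu Xfxu; have := dissipative Xx Uu Xfxu.
have := Kinf_ge0 alpha1_Kinf (addr_ge0 (normr_ge0 (x - xe)) (normr_ge0 (u - ue))).
lra.
Qed.

Lemma Jcost_lower_bound x u : X x -> admissible x u ->
  N%:R * l i0 xe ue + M <= J x u + lambda1 x.
Proof.
move=> Xx adm_u; have [U_u _ X0_end] := adm_u.
have : \sum_(k < N) (l i0 xe ue - l i0 (traj f x u k) (u k))
       <= lambda1 x - lambda1 (traj f x u N).
  apply: (sum_le_telescope (a := fun k => l i0 xe ue - l i0 (traj f x u k) (u k))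
    (w := fun k => lambda1 (traj f x u k))) => k ltkN.
  apply: (stage_cost_dissipation (x := traj f x u k)).
  - by apply: admissible_traj_in => //; apply: ltnW.
  - exact: U_u.
  - exact: (admissible_traj_in (j := k.+1)).
rewrite big_split /= sumrN sumr_const card_ord -mulr_natl.
have := lambda1_ge (X0X X0_end); have := F1_ge0 X0_end.
rewrite Jcost_first //.
lra.
Qed.

Section ClosedLoop.
Variables (xs : nat -> 'rV[R]_n) (us : nat -> nat -> 'rV[R]_m).
Hypothesis X_xs0 : X (xs 0%N).
Hypothesis us_admissible : forall k, admissible (xs k) (us k).
Hypothesis us_improves : forall k,
  J (xs k.+1) (us k.+1) <= J (xs k.+1) (shifted_candidate f kappa N (xs k) (us k)).
Hypothesis xsS : forall k, xs k.+1 = f (xs k) (us k 0%N).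

Local Notation rotated_value k := (J (xs k) (us k) + lambda1 (xs k)).

Lemma closed_loop_in_X k : X (xs k).
Proof.
elim: k => [|k IH] //; rewrite xsS.
exact: (admissible_traj_in (j := 1) IH (us_admissible k)).
Qed.

Lemma closed_loop_rotated_cost_le k :
  alpha1 (`|xs k - xe| + `|us k 0%N - ue|) <= rotated_value k - rotated_value k.+1.
Proof.
have [U_us _ _] := us_admissible k.
have := dissipative (closed_loop_in_X k) (U_us 0%N N_gt0).
rewrite -xsS => /(_ (closed_loop_in_X k.+1)).
have := us_improves k.
have := Jcost_shifted_candidate_le (us_admissible k); rewrite -xsS.
lra.
Qed.

Lemma closed_loop_cvg : (fun k => (xs k, us k 0%N)) @ \oo --> (xe, ue).
Proof.
apply: cvg_pair_dist; apply: (Kinf_cvg0 alpha1_Kinf) => [k|].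
  by rewrite addr_ge0.
pose C := rotated_value 0%N - (N%:R * l i0 xe ue + M).
apply: (@nneg_bounded_series_cvg0 _ _ C) => [k|K].
  exact/Kinf_ge0/addr_ge0.
apply: le_trans (sum_le_telescope (fun k _ => closed_loop_rotated_cost_le k)) _.
rewrite /C lerD2l lerN2.
exact: Jcost_lower_bound (closed_loop_in_X K) (us_admissible K).
Qed.

End ClosedLoop.

End DissipativeMPC.

Theorem theorem4p8 (R : realType) (n m N s : nat)
  (f : 'rV[R]_n -> 'rV[R]_m -> 'rV[R]_n)
  (X : set 'rV[R]_n) (U : set 'rV[R]_m) (X0 : set 'rV[R]_n)
  (l : 'I_s -> 'rV[R]_n -> 'rV[R]_m -> R) (F1 : 'rV[R]_n -> R)
  (xe : 'rV[R]_n) (ue : 'rV[R]_m) (lambda1 : 'rV[R]_n -> R)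
  (alpha1 gammaF gammaL : R -> R) (kappa : 'rV[R]_n -> 'rV[R]_m)
  (i0 : 'I_s) (x0 : 'rV[R]_n) (xs : nat -> 'rV[R]_n) (us : nat -> nat -> 'rV[R]_m) :
  (* setting *)
  (2 <= N)%N -> (2 <= s)%N ->
  (* i0 is objective 1 *)
  (i0 : nat) = 0%N ->
  continuous (fun p : 'rV[R]_n * 'rV[R]_m => f p.1 p.2) ->
  X0 `<=` X ->
  {within X0, continuous F1} ->
  (forall x, X0 x -> 0 <= F1 x) ->
  (* Assumption A (i) *)
  X xe -> U ue -> f xe ue = xe ->
  (* Assumption A (ii) *)
  (exists M, forall x, X x -> M <= lambda1 x) ->
  lambda1 xe = 0 ->
  Kinf alpha1 ->
  (forall x u, X x -> U u -> X (f x u) ->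
     alpha1 (`|x - xe| + `|u - ue|)
       <= l i0 x u - l i0 xe ue + lambda1 x - lambda1 (f x u)) ->
  (* Assumption A (iii) *)
  (forall i, {within [set p : 'rV[R]_n * 'rV[R]_m | X p.1 /\ U p.2],
              continuous (fun p => l i p.1 p.2)}) ->
  (* Assumption A (iv) *)
  X0 xe ->
  (forall x, X0 x -> U (kappa x) /\ X0 (f x (kappa x))) ->
  (forall x, X0 x ->
     F1 (f x (kappa x)) + l i0 x (kappa x) <= F1 x + l i0 xe ue) ->
  (* Assumption A (v) *)
  (forall x, feasible_set f X U X0 N x -> externally_stable f X U X0 l F1 N x) ->
  (* Assumption B *)
  Kinf gammaF -> Kinf gammaL ->
  F1 xe = 0 ->
  (forall x, X0 x -> `|F1 x - F1 xe| <= gammaF `|x - xe|) ->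
  (forall x, X x -> `|lambda1 x - lambda1 xe| <= gammaL `|x - xe|) ->
  (* initial condition *)
  feasible_set f X U X0 N x0 ->
  (* Algorithm 1: any admissible choice of efficient solutions *)
  xs 0%N = x0 ->
  (forall k, efficient f X U X0 l F1 N (xs k) (us k)) ->
  (forall k, Jcost f l F1 N (xs k.+1) (us k.+1) i0
             <= Jcost f l F1 N (xs k.+1)
                  (shifted_candidate f kappa N (xs k) (us k)) i0) ->
  (forall k, xs k.+1 = f (xs k) (us k 0%N)) ->
  (* conclusion *)
  forall i : 'I_s, (0 < i)%N ->
    (limn_esup (fun K : nat =>
       ((K%:R)^-1 * \sum_(k < K) l i (xs k) (us k 0%N))%:E)
     <= (l i xe ue)%:E)%E.
Proof.
move=> N_ge2 _ i0E _ X0X _ F1_ge0 Xxe Uue _ [M lambda1_ge] _ alpha1_Kinf dissipative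
  l_cont _ _ terminal_decrease _ _ _ _ _ _ [Xx0 _] xs0 efficient_us us_improves xsS i _.
have N_gt0 : (0 < N)%N by apply: leq_trans N_ge2.
have X_xs0 : X (xs 0%N) by rewrite xs0.
have us_admissible k : admissible f X U X0 N (xs k) (us k) := (efficient_us k).1.
have in_XU k : [set p | X p.1 /\ U p.2] (xs k, us k 0%N).
  split; first exact: (closed_loop_in_X N_gt0 X0X X_xs0 us_admissible xsS).
  by have [U_us _ _] := us_admissible k; apply: U_us.
have xu_cvg := closed_loop_cvg N_gt0 i0E X0X F1_ge0 lambda1_ge alpha1_Kinf dissipative
  terminal_decrease X_xs0 us_admissible us_improves xsS.
have in_XU_e : [set p | X p.1 /\ U p.2] (xe, ue) by [].
have l_cvg := within_continuous_cvg (l_cont i) in_XU_e in_XU xu_cvg.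
by rewrite (cesaro_limn_esup l_cvg).
Qed.
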